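(* Let $F_0$ be a weighted QF-NIA formula consisting of a set $H_0$ of hard clauses and a set $S_0=\{[D_1,\Omega_1],\dots,[D_m,\Omega_m]\}$ of soft clauses with positive natural-number weights. Consider the following procedure $\mathrm{SolveMaxSMT}(F_0)$. Initialization. Choose artificial bounds $B$ sufficient to linearize $F_0$. Linearize to obtain linear hard clauses $H$ and linear soft clauses $S$ (see context). Set $\mathit{bsf}:=\mathrm{undef}$ and $\mathit{msc}:=\infty$. Loop. Repeat until a time limit is exceeded. Call a threshold Max-SMT(QF-LIA) oracle on $(H,S,B,\mathit{msc})$. This oracle returns $\mathrm{Unsat}$ if there is no integer model $\alpha$ of $H$ with $\mathrm{cost}_S(\alpha)\le\mathit{msc}$. Otherwise it returns a model $M$ of $H$ with $\mathrm{cost}_S(M)\le\mathit{msc}$ minimizing the pair $(\mathrm{cost}_B(M),\mathrm{cost}_S(M))$ lexicographically among all such models. Act on the result as follows. - If the oracle returns $\mathrm{Unsat}$: return $\langle\mathrm{Unsat},\mathrm{undef}\rangle$ if $\mathit{bsf}=\mathrm{undef}$, and $\langle\mathrm{Sat},\mathit{bsf}\rangle$ otherwise. - Else, if $\mathrm{cost}_B(M)=0$: set $\mathit{bsf}:=M$ and $\mathit{msc}:=\mathrm{cost}_S(M)-1$. - Else: choose a nonempty set of bounds of $B$ violated by $M$. Replace each such $V\ge L$ by $V\ge M(V)$ and each such $V\le U$ by $V\le M(V)$. Add to $H$ the case-splitting clauses $V=K\rightarrow v_Q=Q[V:=K]$ for every value $K$ newly included in the domain of $V$ and every monomial $Q$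 linearized using $V$. Timeout. If the time limit is exceeded, return $\langle\mathrm{Unknown},\mathrm{undef}\rangle$. Then: (i) if $\mathrm{SolveMaxSMT}(F_0)$ returns $\langle\mathrm{Sat},M\rangle$, then $H_0$ is satisfiable and $M$ (restricted to the variables of $F_0$) is a model of $H_0$ that minimizes the sum of the weights of the clauses of $S_0$ it falsifies, among all integer models of $H_0$; (ii) if $\mathrm{SolveMaxSMT}(F_0)$ returns $\langle\mathrm{Unsat},\mathrm{undef}\rangle$, then $H_0$ is unsatisfiable over the integers.
   Context: QF-NIA clauses are disjunctions of polynomial inequalities with integer coefficients over integer-valued variables. Artificial bounds are a finite set $B$ of constraints $V\ge L$ or $V\le U$ ($L,U\in\mathbb{Z}$). Linearization. While some non-linear monomial $Q$ occurs, pick a variable $V$ of $Q$ having both a lower bound $l$ and an upper bound $u$ (from $F_0$ or $B$). Introduce a fresh integer variable $v_Q$ and replace every occurrence of $Q$ by $v_Q$. Add, for each integer $K$ with $l\le K\le u$, the case-splitting clause $V=K\rightarrow v_Q=Q[V:=K]$, where $Q[V:=K]$ is $Q$ with $V$ evaluated at $K$. New non-linear monomials are processed in the same way. Linear clauses. $H$ consists of the clauses of $H_0$ with monomials replaced by their fresh variables, together with all case-splitting clauses. $S$ consists of the soft clauses $[D_i',\Omega_i]$, where $D_i'$ is $D_i$ with monomials replaced. Costs. For an assignment $\alpha$, the bound cost $\mathrm{cost}_B(\alpha)$ is the number of bounds of $B$ (each treated as a soft clause of weight $1$) that $\alpha$ violates. The soft cost $\mathrm{cost}_S(\alpha)$ is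 $\sum\{\Omega : [D,\Omega]\in S,\ \alpha\not\models D\}$. *)

From Stdlib Require List.
From HB Require Import structures.
From mathcomp Require Import all_boot all_order all_algebra.
Set Implicit Arguments. Unset Strict Implicit. Unset Printing Implicit Defensive.
Import Order.TTheory GRing.Theory Num.Theory.
Local Open Scope ring_scope.

Definition var := nat.
Definition assignment := var -> int.

(* A monomial is a finite multiset of variables (their product);
   [::] is the constant monomial 1.  Two monomials are the same monomial
   iff they are permutations of each other ([perm_eq]). *)
Definition monomial := seq var.
Definition term := (int * monomial)%type.
Definition poly := seq term.

Inductive cmp := CLe | CLt | CEq | CNe | CGe | CGt.
Definition atom := (poly * cmp)%type.
Definition clause := seq atom.
Definition soft := (clause * nat)%type.

Definition eval_mono (a : assignment) (m : monomial) : int :=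
  \prod_(x <- m) a x.
Definition eval_poly (a : assignment) (p : poly) : int :=
  \sum_(t <- p) t.1 * eval_mono a t.2.
Definition eval_cmp (c : cmp) (z : int) : bool :=
  match c with
  | CLe => z <= 0 | CLt => z < 0 | CEq => z == 0
  | CNe => z != 0 | CGe => 0 <= z | CGt => 0 < z
  end.
Definition sat_atom (a : assignment) (l : atom) : bool :=
  eval_cmp l.2 (eval_poly a l.1).
Definition sat_clause (a : assignment) (C : clause) : bool :=
  has (sat_atom a) C.
Definition sat_hard (a : assignment) (H : seq clause) : bool :=
  all (sat_clause a) H.
Definition cost_S (a : assignment) (S : seq soft) : nat :=
  (\sum_(s <- S | ~~ sat_clause a s.1) s.2)%N.

Definition monos_clause (C : clause) : seq monomial :=
  flatten [seq [seq t.2 | t <- l.1] | l <- C].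
Definition monos_F0 (H0 : seq clause) (S0 : seq soft) : seq monomial :=
  flatten [seq monos_clause C | C <- H0] ++ flatten [seq monos_clause s.1 | s <- S0].
Definition vars_F0 (H0 : seq clause) (S0 : seq soft) : seq var :=
  flatten (monos_F0 H0 S0).

Definition nonlinear (m : monomial) : bool := (1 < size m)%N.

Inductive bound := Lower of var & int
                 | Upper of var & int.

Definition bound_var (b : bound) : var :=
  match b with Lower v _ => v | Upper v _ => v end.
Definition sat_bound (a : assignment) (b : bound) : bool :=
  match b with Lower v L => L <= a v | Upper v U => a v <= U end.
Definition cost_B (a : assignment) (B : seq bound) : nat :=
  count (fun b => ~~ sat_bound a b) B.

Definition bound_clause (b : bound) : clause :=
  match b with
  | Lower v L => [:: ([:: (1, [:: v]); (- L, [::])], CGe)]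
  | Upper v U => [:: ([:: (1, [:: v]); (- U, [::])], CLe)]
  end.
Definition clause_bound (C : clause) : option bound :=
  match C with
  | [:: ([:: (a, [:: v]); (c, [::])], CGe)] =>
      if a == 1 then Some (Lower v (- c)) else None
  | [:: ([:: (a, [:: v]); (c, [::])], CLe)] =>
      if a == 1 then Some (Upper v (- c)) else None
  | _ => None
  end.
Definition f0_bounds (H0 : seq clause) : seq bound := pmap clause_bound H0.

Definition lowers (bs : seq bound) (v : var) : seq int :=
  pmap (fun b => if b is Lower w L then (if w == v then Some L else None) else None) bs.
Definition uppers (bs : seq bound) (v : var) : seq int :=
  pmap (fun b => if b is Upper w U then (if w == v then Some U else None) else None) bs.

Definition dom_of (bs : seq bound) (v : var) : option (int * int) :=
  match lowers bs v, uppers bs v with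
  | l :: ls, u :: us => Some (foldr Num.max l ls, foldr Num.min u us)
  | _, _ => None
  end.

Definition irange (l u : int) : seq int :=
  if l <= u then [seq l + (k%:Z) | k <- iota 0 (`|u - l|%N).+1] else [::].
Definition dom_range (bs : seq bound) (v : var) : seq int :=
  if dom_of bs v is Some (l, u) then irange l u else [::].

(* One linearization step: the non-linear monomial Q is replaced by the
   fresh variable v_Q, the variable V of Q having been picked. *)
Record ldef := LDef { ld_mono : monomial; ld_var : var; ld_fresh : var }.

Definition ld_rest (d : ldef) : monomial := filter (predC1 (ld_var d)) (ld_mono d).
Definition ld_exp (d : ldef) : nat := count_mem (ld_var d) (ld_mono d).

Definition find_def (defs : seq ldef) (m : monomial) : option ldef :=
  ohead [seq d <- defs | perm_eq (ld_mono d) m].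

Definition repl_term (defs : seq ldef) (t : term) : term :=
  if nonlinear t.2 then
    (if find_def defs t.2 is Some d then (t.1, [:: ld_fresh d]) else t)
  else t.
Definition repl_clause (defs : seq ldef) (C : clause) : clause :=
  [seq ([seq repl_term defs t | t <- l.1], l.2) | l <- C].

(* The case-splitting clause  V = K -> v_Q = Q[V:=K],
   where Q[V:=K] = K^e * R (R = Q without V, itself linearized):
   (V - K != 0) \/ (v_Q - K^e * R' = 0). *)
Definition split_clause (defs : seq ldef) (d : ldef) (K : int) : clause :=
  [:: ([:: (1, [:: ld_var d]); (- K, [::])], CNe);
      ((1, [:: ld_fresh d]) :: [:: repl_term defs (- (K ^+ ld_exp d), ld_rest d)], CEq)].

(* [defs] is a linearization of F0 = (H0, S0) w.r.t. the artificial bounds B: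
   it is exactly the set of monomials processed by the linearization procedure
   (every non-linear monomial of F0, and recursively every non-linear
   Q[V:=K]-monomial R, is processed exactly once; nothing else is processed),
   each with a picked variable V of Q having both a lower and an upper bound
   (from F0 or B), and a fresh variable v_Q. *)
Definition lin_ok (H0 : seq clause) (S0 : seq soft) (B : seq bound)
    (defs : seq ldef) : Prop :=
  [/\ uniq [seq ld_fresh d | d <- defs],
      (forall d, List.In d defs ->
         ld_fresh d \notin vars_F0 H0 S0 /\ ld_fresh d \notin [seq bound_var b | b <- B]),
      pairwise (fun d1 d2 => ~~ perm_eq (ld_mono d1) (ld_mono d2)) defs,
      (forall d, List.In d defs ->
         [/\ nonlinear (ld_mono d), ld_var d \in ld_mono d,
             dom_of (f0_bounds H0 ++ B) (ld_var d) != None,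
             nonlinear (ld_rest d) -> has (fun d' => perm_eq (ld_mono d') (ld_rest d)) defs
           & has (perm_eq (ld_mono d)) (monos_F0 H0 S0)
             || has (fun d' => perm_eq (ld_rest d') (ld_mono d)) defs]) &
      (forall m, m \in monos_F0 H0 S0 -> nonlinear m ->
         has (fun d => perm_eq (ld_mono d) m) defs)].

Definition splits (defs : seq ldef) (dom : var -> seq int) : seq clause :=
  flatten [seq [seq split_clause defs d K | K <- dom (ld_var d)] | d <- defs].

Definition init_H (H0 : seq clause) (B : seq bound) (defs : seq ldef) : seq clause :=
  [seq repl_clause defs C | C <- H0] ++ splits defs (dom_range (f0_bounds H0 ++ B)).
Definition lin_S (defs : seq ldef) (S0 : seq soft) : seq soft :=
  [seq (repl_clause defs s.1, s.2) | s <- S0].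

(* msc : option int, None standing for infinity *)
Definition le_msc (c : nat) (msc : option int) : bool :=
  if msc is Some m then c%:Z <= m else true.

Definition lex_le (p q : nat * nat) : bool :=
  (p.1 < q.1)%N || ((p.1 == q.1) && (p.2 <= q.2)%N).

Inductive oresult := OUnsat | OModel of assignment.

Definition oracle_spec (H : seq clause) (S : seq soft) (B : seq bound)
    (msc : option int) (r : oresult) : Prop :=
  match r with
  | OUnsat => forall a, sat_hard a H -> ~~ le_msc (cost_S a S) msc
  | OModel M =>
      [/\ sat_hard M H, le_msc (cost_S M S) msc &
          forall a, sat_hard a H -> le_msc (cost_S a S) msc ->
            lex_le (cost_B M B, cost_S M S) (cost_B a B, cost_S a S)]
  end.

Inductive result := RSat of assignment | RUnsat | RUnknown.

Definition relax (M : assignment) (b : bound) : bound :=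
  match b with Lower v _ => Lower v (M v) | Upper v _ => Upper v (M v) end.

Definition update_B (M : assignment) (sel : nat -> bool) (B : seq bound) : seq bound :=
  [seq (if sel i then relax M (nth (Lower 0 0) B i) else nth (Lower 0 0) B i)
     | i <- iota 0 (size B)].

Definition new_splits (H0 : seq clause) (defs : seq ldef) (Bold Bnew : seq bound)
    : seq clause :=
  splits defs (fun v => [seq K <- dom_range (f0_bounds H0 ++ Bnew) v
                          | K \notin dom_range (f0_bounds H0 ++ Bold) v]).

(* The oracle answers and the choices made
   are arbitrary subject to their specifications; the time limit may be
   exceeded at any iteration. *)
Inductive run (H0 : seq clause) (defs : seq ldef) (S : seq soft) :
    seq clause -> seq bound -> option assignment -> option int -> result -> Prop :=
  | run_timeout H B bsf msc : run H0 defs S H B bsf msc RUnknown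
  | run_unsat H B bsf msc :
      oracle_spec H S B msc OUnsat ->
      run H0 defs S H B bsf msc (if bsf is Some M then RSat M else RUnsat)
  | run_found H B bsf msc M r :
      oracle_spec H S B msc (OModel M) ->
      cost_B M B = 0%N ->
      run H0 defs S H B (Some M) (Some ((cost_S M S)%:Z - 1)) r ->
      run H0 defs S H B bsf msc r
  | run_refine H B bsf msc M (sel : nat -> bool) r :
      oracle_spec H S B msc (OModel M) ->
      cost_B M B <> 0%N ->
      (exists2 i, (i < size B)%N & sel i) ->
      (forall i, (i < size B)%N -> sel i -> ~~ sat_bound M (nth (Lower 0 0) B i)) ->
      run H0 defs S (H ++ new_splits H0 defs B (update_B M sel B))
          (update_B M sel B) bsf msc r ->
      run H0 defs S H B bsf msc r.

Definition solve_maxsmt (H0 : seq clause) (S0 : seq soft) (r : result) : Prop :=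
  exists (B : seq bound) (defs : seq ldef),
    lin_ok H0 S0 B defs /\
    run H0 defs (lin_S defs S0) (init_H H0 B defs) B None None r.

(* The loop keeps two invariants on the linear hard clauses H.  Soundness of H:
   every model a of H0 extends to a model of H with the same soft cost, by giving
   each fresh variable v_Q the value of Q in a.  Completeness of H: every model of
   H satisfies the linearized H0 and every case split V = K -> v_Q = Q[V:=K] for K
   in the current domain of V; relaxing bounds only adds case splits, which are
   true in the extensions, and leaves every picked V with both bounds.  A model M
   of H violating no bound of B gives each picked V a value of its domain, so the
   case splits force v_Q = Q by induction on the degree of Q: M is then a model of
   H0 whose linear cost is its true cost.  Hence bsf is always a model of H0 of
   cost msc + 1, and when the oracle finally answers Unsat, soundness shows that no
   model of H0 has cost at most msc (or, if bsf is undef, that H0 has no model). *)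

From mathcomp Require Import all_boot all_order all_algebra zify.
Import Order.TTheory GRing.Theory Num.Theory.
Set Implicit Arguments. Unset Strict Implicit. Unset Printing Implicit Defensive.
Local Open Scope ring_scope.

Lemma has_In (T : Type) (p : pred T) s : has p s -> exists2 x, List.In x s & p x.
Proof.
elim: s => [|x s IH] //= /orP[px|/IH[y ys py]]; first by exists x; first left.
by exists y; first right.
Qed.

Lemma In_map_mem (T : Type) (U : eqType) (f : T -> U) x s :
  List.In x s -> f x \in map f s.
Proof. by elim: s => [|y s IH] //= [->|/IH fx]; rewrite in_cons ?eqxx ?fx ?orbT. Qed.

Lemma eval_mono1 a v : eval_mono a [:: v] = a v.
Proof. by rewrite /eval_mono big_seq1. Qed.

Lemma eval_mono_split a v m :
  eval_mono a m = a v ^+ count_mem v m * eval_mono a (filter (predC1 v) m).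
Proof.
rewrite /eval_mono; elim: m => [|x m IH] /=; first by rewrite !big_nil mulr1.
rewrite big_cons IH; case: eqVneq => [->|ne] /=; first by rewrite exprS mulrA.
by rewrite big_cons mulrCA.
Qed.

Lemma eq_sat_clause a b C :
  {in monos_clause C, eval_mono a =1 eval_mono b} -> sat_clause a C = sat_clause b C.
Proof.
rewrite /monos_clause; elim: C => [|l C IH] //= ab.
rewrite IH => [|m mC]; last by apply: ab; rewrite mem_cat mC orbT.
congr orb; rewrite /sat_atom /eval_poly; congr eval_cmp.
by apply: eq_big_seq => t tl; rewrite ab // mem_cat map_f.
Qed.

Lemma eq_sat_hard a b Hs :
  {in flatten [seq monos_clause C | C <- Hs], eval_mono a =1 eval_mono b} ->
  sat_hard a Hs = sat_hard b Hs.
Proof.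
elim: Hs => [|C Hs IH] //= ab.
rewrite (@eq_sat_clause a b) => [|m mC]; last by apply: ab; rewrite mem_cat mC.
by rewrite IH // => m mHs; apply: ab; rewrite mem_cat mHs orbT.
Qed.

Lemma eq_cost_S a b Ss :
  {in flatten [seq monos_clause s.1 | s <- Ss], eval_mono a =1 eval_mono b} ->
  cost_S a Ss = cost_S b Ss.
Proof.
rewrite /cost_S; elim: Ss => [|s Ss IH] /= ab; first by rewrite !big_nil.
rewrite !big_cons (@eq_sat_clause a b) => [|m ms]; last by apply: ab; rewrite mem_cat ms.
by rewrite IH // => m mSs; apply: ab; rewrite mem_cat mSs orbT.
Qed.

Lemma sat_hard_cat a H1 H2 : sat_hard a (H1 ++ H2) = sat_hard a H1 && sat_hard a H2.
Proof. exact: all_cat. Qed.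

Definition consistent (defs : seq ldef) (a : assignment) : Prop :=
  forall d, List.In d defs -> a (ld_fresh d) = eval_mono a (ld_mono d).

Lemma find_defP defs m d :
  find_def defs m = Some d -> List.In d defs /\ perm_eq (ld_mono d) m.
Proof.
rewrite /find_def; elim: defs => [|d' defs IH] //=.
by case: ifP => [pe [<-]|_ /IH[? ?]]; split => //; [left|right].
Qed.

Lemma repl_termE defs a t :
  (forall d, List.In d defs -> perm_eq (ld_mono d) t.2 ->
     a (ld_fresh d) = eval_mono a (ld_mono d)) ->
  (repl_term defs t).1 * eval_mono a (repl_term defs t).2 = t.1 * eval_mono a t.2.
Proof.
rewrite /repl_term => tE; case: ifP => // _; case E: find_def => [d|] //=.
have [dD pe] := find_defP E.
by rewrite eval_mono1 (tE d dD pe) /eval_mono (perm_big _ pe).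
Qed.

Lemma sat_clause_repl defs a C :
  consistent defs a -> sat_clause a (repl_clause defs C) = sat_clause a C.
Proof.
move=> aD; rewrite /sat_clause has_map; apply: eq_has => l.
rewrite /sat_atom /eval_poly /= big_map; congr eval_cmp; apply: eq_bigr => t _.
by apply: repl_termE => d dD _; apply: aD.
Qed.

Lemma sat_hard_repl defs a Hs :
  consistent defs a -> sat_hard a [seq repl_clause defs C | C <- Hs] = sat_hard a Hs.
Proof.
by move=> aD; rewrite /sat_hard all_map; apply: eq_all => C /=; apply: sat_clause_repl.
Qed.

Lemma cost_S_lin defs a S0 : consistent defs a -> cost_S a (lin_S defs S0) = cost_S a S0.
Proof.
by move=> aD; rewrite /cost_S big_map; apply: eq_bigl => s /=; rewrite sat_clause_repl.
Qed.

Lemma sat_split_clause defs a d K :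
  (forall d', List.In d' defs -> perm_eq (ld_mono d') (ld_rest d) ->
     a (ld_fresh d') = eval_mono a (ld_mono d')) ->
  sat_clause a (split_clause defs d K) =
    (a (ld_var d) != K) || (a (ld_fresh d) == K ^+ ld_exp d * eval_mono a (ld_rest d)).
Proof.
move=> restE; rewrite /sat_clause /sat_atom /eval_poly /= !big_cons !big_nil /=.
rewrite (@repl_termE _ _ (_, ld_rest d) restE) !eval_mono1 /eval_mono big_nil /=.
by rewrite -/(eval_mono a _) !mul1r mulr1 !addr0 mulNr !subr_eq0 orbF.
Qed.

Lemma consistent_sat_split defs a d K :
  consistent defs a -> List.In d defs -> sat_clause a (split_clause defs d K).
Proof.
move=> aD dD; rewrite sat_split_clause => [|d' d'D _]; last exact: aD.
case: eqVneq => //= <-; rewrite (aD d dD) [eval_mono a _](eval_mono_split a (ld_var d)).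
exact: eqxx.
Qed.

Lemma size_ld_rest d : ld_var d \in ld_mono d -> (size (ld_rest d) < size (ld_mono d))%N.
Proof.
rewrite /ld_rest size_filter -has_pred1 has_count => pos.
by rewrite -(count_predC (pred1 (ld_var d))) -[X in (X < _)%N]add0n ltn_add2r.
Qed.

Lemma consistent_of_splits defs a :
  (forall d, List.In d defs -> ld_var d \in ld_mono d) ->
  (forall d, List.In d defs -> sat_clause a (split_clause defs d (a (ld_var d)))) ->
  consistent defs a.
Proof.
move=> varD splitD.
suff sizeE n d : List.In d defs -> (size (ld_mono d) < n)%N ->
    a (ld_fresh d) = eval_mono a (ld_mono d).
  by move=> d dD; apply: (sizeE (size (ld_mono d)).+1).
elim: n d => [|n IH] d dD // ltdn.
have restE d' : List.In d' defs -> perm_eq (ld_mono d') (ld_rest d) ->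
    a (ld_fresh d') = eval_mono a (ld_mono d').
  move=> d'D pe; apply: IH d'D _.
  by rewrite (perm_size pe); apply: leq_trans (size_ld_rest (varD d dD)) (ltnSE ltdn).
move: (splitD d dD); rewrite (sat_split_clause _ restE) eqxx /= => /eqP ->.
by rewrite [RHS](eval_mono_split a (ld_var d)).
Qed.

Lemma sat_hard_splitsP defs dom a :
  sat_hard a (splits defs dom) <->
  (forall d K, List.In d defs -> K \in dom (ld_var d) ->
     sat_clause a (split_clause defs d K)).
Proof.
rewrite /splits /sat_hard; elim: {2 3}defs => [|d ds IH]; first by split => // _ ? ? [].
rewrite /= all_cat all_map; split => [/andP[/allP dK /IH dsK] d' K [<-|d'D]|dsK].
- exact: dK.
- exact: dsK.
- apply/andP; split; first by apply/allP => K; apply: dsK; left.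
  by apply/IH => d' K d'D; apply: dsK; right.
Qed.

Lemma clause_boundK C b : clause_bound C = Some b -> C = bound_clause b.
Proof.
case: C => [|[p c] [|? ?]] //.
all: case: p => [|[? [|v [|? ?]]] p]; try by case: c.
all: case: p => [|[k [|? ?]] [|? ?]]; try by case: c.
all: by case: c => //=; case: eqP => // -> [<-] /=; rewrite opprK.
Qed.

Lemma sat_bound_clause defs a b :
  sat_clause a (repl_clause defs (bound_clause b)) = sat_bound a b.
Proof.
case: b => v c; rewrite /sat_clause /sat_atom /eval_poly /= !big_cons big_nil eval_mono1.
all: by rewrite /eval_mono big_nil orbF mul1r mulr1 addr0 ?subr_ge0 ?subr_le0.
Qed.

Lemma f0_bounds_sat defs a H0 :
  sat_hard a [seq repl_clause defs C | C <- H0] -> all (sat_bound a) (f0_bounds H0).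
Proof.
rewrite /sat_hard all_map /f0_bounds all_pmap; apply: sub_all => C /=.
by case E: clause_bound => [b|] //=; rewrite (clause_boundK E) sat_bound_clause.
Qed.

Lemma cost_B_eq0 a B : (cost_B a B == 0%N) = all (sat_bound a) B.
Proof. by rewrite /cost_B eqn0Ngt -has_count has_predC negbK. Qed.

Lemma foldr_max_le (l x : int) ls :
  (foldr Num.max l ls <= x) = all (fun y => y <= x) (l :: ls).
Proof. by elim: ls => [|y ls IH] /=; rewrite ?andbT // ge_max IH andbCA. Qed.

Lemma foldr_min_ge (u x : int) us :
  (x <= foldr Num.min u us) = all (fun y => x <= y) (u :: us).
Proof. by elim: us => [|y us IH] /=; rewrite ?andbT // le_min IH andbCA. Qed.

Lemma all_lowers_le a bs v :
  all (sat_bound a) bs -> all (fun L => L <= a v) (lowers bs v).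
Proof. by rewrite all_pmap; apply: sub_all => -[w L|w U] //=; case: eqP => // ->. Qed.

Lemma all_uppers_ge a bs v :
  all (sat_bound a) bs -> all (fun U => a v <= U) (uppers bs v).
Proof. by rewrite all_pmap; apply: sub_all => -[w L|w U] //=; case: eqP => // ->. Qed.

Lemma mem_irange (l u x : int) : (x \in irange l u) = (l <= x <= u).
Proof.
rewrite /irange; case: leP => [lu|ul]; last by apply/esym/negbTE/negP => /andP[? ?]; lia.
apply/mapP/idP => [[k]|xlu]; first by rewrite mem_iota; lia.
by exists `|x - l|%N; [rewrite mem_iota|]; lia.
Qed.

Lemma dom_range_mem a bs v :
  all (sat_bound a) bs -> dom_of bs v != None -> a v \in dom_range bs v.
Proof.
move=> abs; rewrite /dom_range /dom_of.
move: (all_lowers_le v abs) (all_uppers_ge v abs).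
case: lowers => [|l ls]; case: uppers => [|u us] // lo up _.
by rewrite mem_irange foldr_max_le foldr_min_ge lo up.
Qed.

Definition bound_kind (b : bound) : bool * var :=
  match b with Lower v _ => (true, v) | Upper v _ => (false, v) end.

Lemma lowers_eq_nil bs v : (lowers bs v == [::]) = ((true, v) \notin map bound_kind bs).
Proof.
elim: bs => [|[w L|w U] bs IH] //=; rewrite in_cons negb_or -IH xpair_eqE /= [v == w]eq_sym.
by case: (w =P v).
Qed.

Lemma uppers_eq_nil bs v : (uppers bs v == [::]) = ((false, v) \notin map bound_kind bs).
Proof.
elim: bs => [|[w L|w U] bs IH] //=; rewrite in_cons negb_or -IH xpair_eqE /= [v == w]eq_sym.
by case: (w =P v).
Qed.

Lemma dom_of_kinds bs1 bs2 v : map bound_kind bs1 = map bound_kind bs2 ->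
  (dom_of bs1 v != None) = (dom_of bs2 v != None).
Proof.
have domE bs : (dom_of bs v != None) = (lowers bs v != [::]) && (uppers bs v != [::]).
  by rewrite /dom_of; case: lowers => [|? ?]; case: uppers.
by move=> kinds; rewrite !domE !lowers_eq_nil !uppers_eq_nil kinds.
Qed.

Lemma update_B_kinds M sel B : map bound_kind (update_B M sel B) = map bound_kind B.
Proof.
rewrite /update_B -map_comp -[in RHS](mkseq_nth (Lower 0 0) B) /mkseq -map_comp.
by apply: eq_map => i /=; case: sel => //; case: nth.
Qed.

Definition lin_ext (defs : seq ldef) (a : assignment) : assignment := fun v =>
  if ohead [seq d <- defs | ld_fresh d == v] is Some d then eval_mono a (ld_mono d)
  else a v.

Lemma lin_ext_old defs a v :
  (forall d, List.In d defs -> ld_fresh d != v) -> lin_ext defs a v = a v.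
Proof.
rewrite /lin_ext; elim: defs => [|d defs IH] //= fresh.
by rewrite (negbTE (fresh d (or_introl erefl))) IH // => d' d'D; apply: fresh; right.
Qed.

Lemma lin_ext_fresh defs a d : uniq [seq ld_fresh d | d <- defs] -> List.In d defs ->
  lin_ext defs a (ld_fresh d) = eval_mono a (ld_mono d).
Proof.
rewrite /lin_ext; elim: defs => [|d0 defs IH] //= /andP[d0_new uniq_defs] [->|dD].
  by rewrite eqxx.
have -> : (ld_fresh d0 == ld_fresh d) = false.
  by apply: contraNF d0_new => /eqP->; apply: In_map_mem.
exact: IH.
Qed.

Section Linearization.

Variables (H0 : seq clause) (S0 : seq soft) (B0 : seq bound) (defs : seq ldef).
Hypothesis defs_ok : lin_ok H0 S0 B0 defs.

Lemma ld_var_mem d : List.In d defs -> ld_var d \in ld_mono d.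
Proof. by case: defs_ok => _ _ _ ok _ /ok[]. Qed.

(* A processed monomial is either a monomial of F0 or the rest R of a strictly
   larger processed monomial; induct on the gap to the largest one. *)
Lemma ld_mono_vars d : List.In d defs -> {subset ld_mono d <= vars_F0 H0 S0}.
Proof.
case: defs_ok => _ _ _ ok _.
pose N := \max_(n <- [seq size (ld_mono d) | d <- defs]) n.
have sizeN d' : List.In d' defs -> (size (ld_mono d') <= N)%N.
  by move=> d'D; apply: (@leq_bigmax_seq _ _ _ (fun n => n)) => //; apply: In_map_mem.
suff gapP k d' : List.In d' defs -> (N < size (ld_mono d') + k)%N ->
    {subset ld_mono d' <= vars_F0 H0 S0}.
  by move=> dD; apply: (gapP N.+1) => //; rewrite addnS ltnS leq_addl.
elim: k d' => [|k IH] d' d'D gap; first by move: gap; rewrite addn0 ltnNge sizeN.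
have [_ _ _ _ /orP[/hasP[m mF0 pe]|/has_In[d'' d''D pe]]] := ok d' d'D => x xd'.
  by apply/flattenP; exists m; rewrite // -(perm_mem pe).
have [_ var_d'' _ _ _] := ok d'' d''D.
apply: (IH d'' d''D).
  apply: leq_trans gap _; rewrite -(perm_size pe) addnS -addSn leq_add2r.
  exact: size_ld_rest.
by move: xd'; rewrite -(perm_mem pe) mem_filter => /andP[].
Qed.

Lemma lin_ext_vars a : {in vars_F0 H0 S0, lin_ext defs a =1 a}.
Proof.
move=> x xF0; apply: lin_ext_old => d dD; case: defs_ok => _ fresh _ _ _.
by have [fresh_d _] := fresh d dD; apply: contraNneq fresh_d => ->.
Qed.

Lemma eval_mono_lin_ext a m : {subset m <= vars_F0 H0 S0} ->
  eval_mono (lin_ext defs a) m = eval_mono a m.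
Proof. by move=> mF0; apply: eq_big_seq => x /mF0; apply: lin_ext_vars. Qed.

Lemma consistent_lin_ext a : consistent defs (lin_ext defs a).
Proof.
move=> d dD; case: defs_ok => uniq_fresh _ _ _ _.
by rewrite lin_ext_fresh // eval_mono_lin_ext //; apply: ld_mono_vars.
Qed.

Lemma sat_hard_lin_ext a :
  sat_hard (lin_ext defs a) [seq repl_clause defs C | C <- H0] = sat_hard a H0.
Proof.
rewrite sat_hard_repl; last exact: consistent_lin_ext.
apply: eq_sat_hard => m mH0.
by apply: eval_mono_lin_ext => x xm; apply/flattenP; exists m; rewrite // mem_cat mH0.
Qed.

Lemma cost_S_lin_ext a : cost_S (lin_ext defs a) (lin_S defs S0) = cost_S a S0.
Proof.
rewrite cost_S_lin; last exact: consistent_lin_ext.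
apply: eq_cost_S => m mS0.
by apply: eval_mono_lin_ext => x xm; apply/flattenP; exists m; rewrite // mem_cat mS0 orbT.
Qed.

Definition loop_inv (H : seq clause) (B : seq bound) : Prop :=
  [/\ forall a, consistent defs a ->
        sat_hard a [seq repl_clause defs C | C <- H0] -> sat_hard a H,
      forall a, sat_hard a H ->
        sat_hard a [seq repl_clause defs C | C <- H0] /\
        forall d K, List.In d defs -> K \in dom_range (f0_bounds H0 ++ B) (ld_var d) ->
          sat_clause a (split_clause defs d K)
    & forall d, List.In d defs -> dom_of (f0_bounds H0 ++ B) (ld_var d) != None].

Lemma loop_inv_init : loop_inv (init_H H0 B0 defs) B0.
Proof.
split=> [a aD aH0|a|d dD].
- rewrite sat_hard_cat aH0; apply/sat_hard_splitsP => d K dD _.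
  exact: consistent_sat_split.
- by rewrite sat_hard_cat => /andP[aH0 /sat_hard_splitsP].
- by case: defs_ok => _ _ _ ok _; case: (ok d dD).
Qed.

Lemma loop_inv_refine H B M sel : loop_inv H B ->
  loop_inv (H ++ new_splits H0 defs B (update_B M sel B)) (update_B M sel B).
Proof.
case=> sound complete bounded; split=> [a aD aH0|a|d dD].
- rewrite sat_hard_cat sound //; apply/sat_hard_splitsP => d K dD _.
  exact: consistent_sat_split.
- rewrite sat_hard_cat => /andP[/complete[aH0 old] /sat_hard_splitsP new].
  split=> // d K dD dK; case oldK: (K \in dom_range (f0_bounds H0 ++ B) (ld_var d)).
    exact: old.
  by apply: new; rewrite // mem_filter oldK.
- by rewrite (@dom_of_kinds _ (f0_bounds H0 ++ B)) ?bounded // !map_cat update_B_kinds.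
Qed.

Lemma loop_inv_lin_ext H B a : loop_inv H B -> sat_hard a H0 -> sat_hard (lin_ext defs a) H.
Proof.
case=> sound _ _ aH0; apply: sound; first exact: consistent_lin_ext.
by rewrite sat_hard_lin_ext.
Qed.

Lemma loop_inv_bounded H B M : loop_inv H B -> sat_hard M H -> all (sat_bound M) B ->
  consistent defs M /\ sat_hard M H0.
Proof.
case=> _ complete bounded /complete[MH0 splitM] MB.
have Mbs : all (sat_bound M) (f0_bounds H0 ++ B) by rewrite all_cat (f0_bounds_sat MH0).
have MD : consistent defs M.
  apply: consistent_of_splits => [d|d dD]; first exact: ld_var_mem.
  by apply: splitM; rewrite // dom_range_mem ?bounded.
by rewrite -(sat_hard_repl _ MD).
Qed.

Definition bsf_inv (bsf : option assignment) (msc : option int) : Prop :=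
  if bsf is Some M then msc = Some ((cost_S M S0)%:Z - 1) /\ sat_hard M H0
  else msc = None.

Definition solve_correct (r : result) : Prop :=
  (forall M : assignment, r = RSat M ->
     (exists a : assignment, sat_hard a H0) /\ sat_hard M H0 /\
     (forall a : assignment, sat_hard a H0 -> (cost_S M S0 <= cost_S a S0)%N)) /\
  (r = RUnsat -> forall a : assignment, ~~ sat_hard a H0).

Lemma run_correct H B bsf msc r : run H0 defs (lin_S defs S0) H B bsf msc r ->
  loop_inv H B -> bsf_inv bsf msc -> solve_correct r.
Proof.
elim=> {H B bsf msc r} [//|H B bsf msc unsat|H B bsf msc M r|H B bsf msc M sel r].
- move=> inv bsfP.
  have lin_ext_ok a : sat_hard a H0 -> ~~ le_msc (cost_S a S0) msc.
    rewrite -cost_S_lin_ext => aH0.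
    exact/unsat/(loop_inv_lin_ext inv aH0).
  case: bsf bsfP => [M [mscE MH0]|mscE].
    split=> [_ [<-]|//]; split; first by exists M.
    by split=> // a /lin_ext_ok; rewrite mscE /=; lia.
  by split=> // _ a; apply/negP => /lin_ext_ok; rewrite mscE.
- move=> [MH _ _] /eqP; rewrite cost_B_eq0 => MB _ IH inv _.
  have [MD MH0] := loop_inv_bounded inv MH MB.
  by apply: IH => //; rewrite /= cost_S_lin.
- move=> _ _ _ _ _ IH inv bsfP; exact: IH (loop_inv_refine _ _ inv) bsfP.
Qed.

End Linearization.

Theorem theorem4p1 (H0 : seq clause) (S0 : seq soft) (r : result) :
  all (fun s : soft => (0 < s.2)%N) S0 ->
  solve_maxsmt H0 S0 r ->
  (forall M : assignment, r = RSat M ->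
     (exists a : assignment, sat_hard a H0) /\ sat_hard M H0 /\
     (forall a : assignment, sat_hard a H0 -> (cost_S M S0 <= cost_S a S0)%N)) /\
  (r = RUnsat -> forall a : assignment, ~~ sat_hard a H0).
Proof.
move=> _ [B [defs [defs_ok runH]]].
exact: (run_correct defs_ok runH (loop_inv_init defs_ok) (erefl None)).
Qed.
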